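(* Consider problem (P) under Assumptions (A1)–(A3) with $\inf_{x\in\mathcal{X}}f(x)>-\infty$, let $x^0\in\mathcal{X}$, and let $\varepsilon>0$. Then the SMIL algorithm terminates after finitely many iterations, returning a point $x^k\in\mathcal{X}$ with $\Psi(x^k;\Delta_k)\le\varepsilon$, i.e. an $\varepsilon$-critical point of (P).
   Context: Problem (P): minimize $f(x)$ subject to $x\in\mathcal{X}:=\bar{\mathcal{X}}\cap\{x\in\mathbb{R}^n : x_i\in\mathbb{Z}\ \forall i\in\mathcal{I}\}$, with $\bar{\mathcal{X}}\subseteq\mathbb{R}^n$ a closed convex polyhedral set, $\mathcal{I}\subseteq\{1,\dots,n\}$, $\mathcal{X}\ne\emptyset$, $f:\mathbb{R}^n\to\mathbb{R}$. Write $x=(u,z)$ with $u$ the components with indices not in $\mathcal{I}$ and $z$ those in $\mathcal{I}$. Assumptions: (A1) $f$ is $C^1$ with locally Lipschitz gradient; (A2) $f(u,z)=f_1(u)+\langle f_2,z\rangle$; (A3) the feasible integer parts $\{z:(u,z)\in\mathcal{X}\}$ form a bounded set. $\|x\|_{PL}$ is the $\ell_1$- or $\ell_\infty$-norm of the components with indices not in $\mathcal{I}$; $\mathbb{B}_{PL}(x,\Delta):=\{w:\|w-x\|_{PL}\le\Delta\}$. Criticality measure: $\Psi(x;\Delta):=\max\{\langle\nabla f(x),x-w\rangle : w\in\mathcal{X}\cap\mathbb{B}_{PL}(x,\Delta)\}$; $\bar x\in\mathcal{X}$ is $\varepsilon$-$\Delta$-critical if $\Psi(\bar x;\Delta)\le\varepsilon$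 and $\varepsilon$-critical if it is $\varepsilon$-$\Delta$-critical for some $\Delta>0$. SMIL algorithm. Input $x^0\in\mathcal{X}$, $\varepsilon\ge0$; parameters $\Delta_0>0$, $\varrho,\kappa\in(0,1)$, $\kappa_m\in(0,1]$. Set $m_0:=f(x^0)$. For $k=0,1,2,\dots$: (S1) compute $x^{k+1}\in\arg\min\{\langle\nabla f(x^k),x\rangle : x\in\mathcal{X}\cap\mathbb{B}_{PL}(x^k,\Delta_k)\}$; (S2) set $a_k:=m_k-f(x^{k+1})$ and $\Psi_k:=\langle\nabla f(x^k),x^k-x^{k+1}\rangle$ (so $\Psi_k=\Psi(x^k;\Delta_k)$); (S3) if $\Psi_k\le\varepsilon$, return $x^k$; (S4) if $a_k<\varrho\Psi_k$, set $\Delta_k\leftarrow\kappa\Delta_k$ and go back to (S1); (S5) set $m_{k+1}:=(1-\kappa_m)m_k+\kappa_m f(x^{k+1})$; (S6) choose $\Delta_{k+1}$ either by the rule $\Delta_{k+1}=\kappa\Delta_k$ if $\rho_k<\varrho_1$, $=\Delta_k$ if $\varrho_1\le\rho_k<\varrho_2$, $=\Delta_k/\kappa$ if $\rho_k\ge\varrho_2$, where $\rho_k:=a_k/\Psi_k$ and $\varrho\le\varrho_1<\varrho_2<1$; or by a reset $\Delta_{k+1}\in[\Delta_{\min},\Delta_{\max}]$, $0<\Delta_{\min}\le\Delta_{\max}$. *)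

From HB Require Import structures.
From mathcomp Require Import all_boot all_order all_algebra.
From mathcomp Require Import all_classical all_reals all_analysis.
Set Implicit Arguments. Unset Strict Implicit. Unset Printing Implicit Defensive.
Import Order.TTheory GRing.Theory Num.Theory.
Import numFieldNormedType.Exports.
Local Open Scope classical_set_scope.
Local Open Scope ring_scope.

Section SMIL.
Context {R : realType} {n : nat}.
Notation vec := 'rV[R]_n.

Definition dot (x y : vec) : R := \sum_(i < n) x ord0 i * y ord0 i.

Definition polyhedron (p : nat) (A : 'M[R]_(p, n)) (b : 'cV[R]_p) : set vec :=
  [set x | forall j : 'I_p, (A *m x^T) j ord0 <= b j ord0].

Definition feasible (Xbar : set vec) (I : {set 'I_n}) : set vec :=
  [set x | Xbar x /\ forall i, i \in I -> x ord0 i \is a Num.int].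

Definition normPL (I : {set 'I_n}) (l1 : bool) (x : vec) : R :=
  if l1 then \sum_(i < n | i \notin I) `|x ord0 i|
  else \big[Num.max/0]_(i < n | i \notin I) `|x ord0 i|.

Definition ballPL I l1 (x : vec) (D : R) : set vec :=
  [set w | normPL I l1 (w - x) <= D].

(* Criticality measure Psi(x; Delta), with g the gradient of f *)
Definition Psi (X : set vec) I l1 (g : vec -> vec) (x : vec) (D : R) : R :=
  sup [set dot (g x) (x - w) | w in X `&` ballPL I l1 x D].

Definition eps_Delta_critical X I l1 g (eps : R) (x : vec) (D : R) : Prop :=
  X x /\ Psi X I l1 g x D <= eps.

Definition eps_critical X I l1 g (eps : R) (x : vec) : Prop :=
  exists D, 0 < D /\ eps_Delta_critical X I l1 g eps x D.

(* y is a valid output of step (S1) at iterate x with radius D *)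
Definition is_argmin X I l1 (g : vec -> vec) (x : vec) (D : R) (y : vec) : Prop :=
  X y /\ ballPL I l1 x D y /\
  forall w, X w -> ballPL I l1 x D w -> dot (g x) y <= dot (g x) w.

(* Admissible choices of Delta_{k+1} in step (S6) *)
Definition next_radius (kappa rho1 rho2 Dmin Dmax : R) (a Ps D D' : R) : Prop :=
  (let r := a / Ps in
     (r < rho1 /\ D' = kappa * D)
  \/ (rho1 <= r /\ r < rho2 /\ D' = D)
  \/ (rho2 <= r /\ D' = D / kappa))
  \/ (Dmin <= D' /\ D' <= Dmax).

(* smil_terminates x m D : every run of SMIL started at step (S1) with current
   iterate x, reference value m_k = m and radius Delta_k = D, whatever the
   choices made in (S1) and (S6), terminates after finitely many steps
   (inner loop (S4) included), and returns at (S3) a point x^k together with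
   its current radius Delta_k > 0 such that x^k is eps-Delta_k-critical. *)
Inductive smil_terminates (X : set vec) (I : {set 'I_n}) (l1 : bool)
    (f : vec -> R) (g : vec -> vec)
    (rho kappa kappam rho1 rho2 Dmin Dmax eps : R) : vec -> R -> R -> Prop :=
| smil_step (x : vec) (m D : R) :
    (exists y, is_argmin X I l1 g x D y) ->
    (forall y, is_argmin X I l1 g x D y ->
       let a := m - f y in
       let Ps := dot (g x) (x - y) in
       (* (S3) return *)
       (Ps <= eps -> 0 < D /\ eps_Delta_critical X I l1 g eps x D) /\
       (* (S4) shrink radius, redo (S1) *)
       (eps < Ps -> a < rho * Ps ->
          smil_terminates X I l1 f g rho kappa kappam rho1 rho2 Dmin Dmax eps
            x m (kappa * D)) /\
       (* (S5)-(S6) accept and move to the next iteration *)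
       (eps < Ps -> rho * Ps <= a ->
          forall D', next_radius kappa rho1 rho2 Dmin Dmax a Ps D D' ->
          smil_terminates X I l1 f g rho kappa kappam rho1 rho2 Dmin Dmax eps
            y ((1 - kappam) * m + kappam * f y) D')) ->
    smil_terminates X I l1 f g rho kappa kappam rho1 rho2 Dmin Dmax eps x m D.

End SMIL.

From HB Require Import structures.
From mathcomp Require Import all_boot all_order all_algebra.
From mathcomp Require Import all_classical all_reals all_analysis.
From mathcomp Require Import ring lra.
Set Implicit Arguments.
Unset Strict Implicit.
Unset Printing Implicit Defensive.

Import Order.TTheory GRing.Theory Num.Theory.
Import numFieldNormedType.Exports.
Local Open Scope classical_set_scope.
Local Open Scope ring_scope.

(* Termination is a potential argument on the reference value [m]: an accepted step lowers [m]
   by at least [kappam rho eps] while keeping [f <= m], and [f] is bounded below on [X], so only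
   finitely many steps are accepted.  Between two accepted steps the radius shrinks
   geometrically, and it cannot shrink forever: by (A2) the integer coordinates enter [f]
   linearly, so the first-order model is exact along them, while the continuous coordinates
   move by at most the radius, where the Taylor remainder is quadratic.  Hence for a small
   radius every step with [Psi > eps] achieves the decrease [rho Psi]. *)

Section MatrixNorm.
Context {R : realDomainType} {m k : nat}.

Lemma mx_entry_le_norm (M : 'M[R]_(m, k)) i j : `|M i j| <= `|M|.
Proof.
rewrite [leRHS]/Num.Def.normr/= mx_normrE.
exact: (le_bigmax _ (fun ij => `|M ij.1 ij.2|) (i, j)).
Qed.

Lemma mx_norm_le (M : 'M[R]_(m, k)) D :
  0 <= D -> (forall i j, `|M i j| <= D) -> `|M| <= D.
Proof.
move=> D0 MD; rewrite /Num.Def.normr/= mx_normrE.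
by apply: bigmax_le => // -[i j] _.
Qed.

End MatrixNorm.

Section InnerProduct.
Context {R : realType} {n : nat}.
Notation vec := 'rV[R]_n.

Lemma dotDr (u v w : vec) : dot u (v + w) = dot u v + dot u w.
Proof. by rewrite /dot -big_split; apply: eq_bigr => i _; rewrite !mxE mulrDr. Qed.

Lemma dotBr (u v w : vec) : dot u (v - w) = dot u v - dot u w.
Proof. by rewrite /dot -sumrB; apply: eq_bigr => i _; rewrite !mxE mulrBr. Qed.

Lemma dotBl (u v w : vec) : dot (u - v) w = dot u w - dot v w.
Proof. by rewrite /dot -sumrB; apply: eq_bigr => i _; rewrite !mxE mulrBl. Qed.

Lemma dot_delta (u : vec) i : dot u (delta_mx ord0 i) = u ord0 i.
Proof.
rewrite /dot (bigD1 i) //= big1 ?addr0 => [|j ji]; rewrite !mxE.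
  by rewrite !eqxx mulr1.
by rewrite (negbTE ji) andbF mulr0.
Qed.

Lemma mulmx_tr_dot p (A : 'M[R]_(p, n)) (x : vec) j :
  (A *m x^T) j ord0 = dot (row j A) x.
Proof. by rewrite mxE; apply: eq_bigr => i _; rewrite !mxE. Qed.

Lemma norm_dot_le (u v : vec) : `|dot u v| <= n%:R * (`|u| * `|v|).
Proof.
rewrite /dot; apply: le_trans (ler_norm_sum _ _ _) _.
apply: (@le_trans _ _ (\sum_(i < n) (`|u| * `|v|))).
  by apply: ler_sum => i _; rewrite normrM ler_pM ?mx_entry_le_norm.
by rewrite sumr_const card_ord mulr_natl.
Qed.

Lemma dot_continuous (u : vec) : continuous (dot u).
Proof.
move=> w; apply: (cvg_big add_continuous); first exact: (@nbhs_filter _ w).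
move=> i _; exact: continuousM (@cst_continuous _ R _ w) (@coord_continuous R 1 n ord0 i w).
Qed.

End InnerProduct.

Lemma closed_int {R : realType} : closed [set r : R | r \is a Num.int].
Proof.
rewrite closedE => r nbhs_nonint /=; apply: contrapT => r_nonint; apply: nbhs_nonint.
set k := Num.floor r.
have k_lt : k%:~R < r.
  rewrite lt_neqAle Num.Theory.floor_le andbT; apply/eqP => kr.
  by apply: r_nonint; rewrite -kr; exact: intr_int.
have lt_k1 : r < (k + 1)%:~R := floorD1_gt r.
near=> y => /intrP [m ym].
have : k%:~R < y < (k + 1)%:~R.
  by apply/andP; split; near: y; [exact: lt_nbhsr | exact: lt_nbhsl].
by rewrite ym !ltr_int ltzD1 => /andP[km]; rewrite leNgt km.
Unshelve. all: by end_near.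
Qed.

Section PLNorm.
Context {R : realType} {n : nat}.
Notation vec := 'rV[R]_n.
Variables (I : {set 'I_n}) (l1 : bool).

Lemma normPL_ge0 (v : vec) : 0 <= normPL I l1 v.
Proof.
by rewrite /normPL; case: l1; [apply: sumr_ge0 => j _ | exact: bigmax_ge_id].
Qed.

Lemma normPL0 : normPL I l1 (0 : vec) = 0.
Proof.
apply/le_anti; rewrite normPL_ge0 andbT /normPL; case: l1.
  by rewrite big1 // => i _; rewrite mxE normr0.
by apply: bigmax_le => // i _; rewrite mxE normr0.
Qed.

Lemma entry_le_normPL (v : vec) i : i \notin I -> `|v ord0 i| <= normPL I l1 v.
Proof.
move=> iI; rewrite /normPL; case: l1.
  by rewrite (bigD1 i) //= lerDl; apply: sumr_ge0.
exact: (le_bigmax_cond 0 (fun j => `|v ord0 j|) iI).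
Qed.

Lemma normPL_continuous : continuous (normPL I l1 : vec -> R).
Proof.
have entry_cont i : continuous (fun v : vec => `|v ord0 i|).
  by move=> v; apply: continuous_comp; [exact: coord_continuous | exact: norm_continuous].
move=> v; rewrite /normPL; case: l1.
- by apply: (cvg_big add_continuous) => [|i _]; [exact: nbhs_filter | exact: entry_cont].
- by apply: (cvg_big max_continuous) => [|i _]; [exact: nbhs_filter | exact: entry_cont].
Qed.

Lemma closed_ballPL (x : vec) D : closed (ballPL I l1 x D).
Proof.
apply: (preimage_closed _ (@closed_le _ D)) => w _.
have subx_cont : {for w, continuous (fun v : vec => v - x)}.
  exact: continuousB (@cvg_id _ _) (@cst_continuous _ _ x w).
exact: continuous_comp subx_cont (@normPL_continuous (w - x)).
Qed.

End PLNorm.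

Section Gradient.
Context {R : realType} {n : nat}.
Notation vec := 'rV[R]_n.
Context {f : vec -> R} {g : vec -> vec}.
Hypothesis grad_f : forall x, differentiable f x /\ forall h, 'd f x h = dot (g x) h.

Lemma derive_along_segment (x d : vec) (t : R) :
  is_derive t (1 : R) (fun s => f (x + s *: d)) (dot (g (x + t *: d)) d).
Proof.
have quotE : (fun h : R => h^-1 *: (f (x + (h *: 1 + t) *: d) - f (x + t *: d))) =
    (fun h : R => h^-1 *: (f (h *: d + (x + t *: d)) - f (x + t *: d))).
  by apply: funext => h; rewrite [h%:A]mulr1 scalerDl addrCA.
have [df dg] := grad_f (x + t *: d).
split; first by rewrite /derivable /= quotE; exact: diff_derivable.
by rewrite /derive /= quotE -/(derive _ _ _) deriveE // dg.
Qed.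

(* Mean value theorem on [x, x + d], then Lipschitz continuity of [g] at the intermediate point. *)
Lemma linearization_error_le (x d : vec) r L :
  (forall y z, `|y - x| < r -> `|z - x| < r -> `|g y - g z| <= L * `|y - z|) ->
  `|d| < r -> `|f (x + d) - f x - dot (g x) d| <= n%:R * `|L| * (`|d| * `|d|).
Proof.
move=> lipg dr.
have [c c01] : exists2 c, c \in `]0, 1[%R &
    f (x + 1 *: d) - f (x + 0 *: d) = dot (g (x + c *: d)) d * (1 - 0).
  apply: (@MVT R (fun s => f (x + s *: d)) (fun s => dot (g (x + s *: d)) d) 0 1 ltr01).
    by move=> t _; exact: derive_along_segment.
  apply: derivable_within_continuous => t _.
  exact: (@ex_derive _ _ _ _ _ _ _ (derive_along_segment x d t)).
rewrite scale1r scale0r addr0 subr0 mulr1 => ->.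
rewrite -dotBl; apply: le_trans (norm_dot_le _ _) _.
rewrite -mulrA ler_pM // mulrA ler_pM //.
have [c0 c1] : 0 <= c /\ c <= 1 by move: c01; rewrite in_itv /= => /andP[/ltW -> /ltW ->].
have cd_le : `|c *: d| <= `|d| by rewrite normrZ ger0_norm // ler_piMl.
apply: le_trans (lipg (x + c *: d) x _ _) _.
- by rewrite addrC addKr; apply: le_lt_trans dr.
- by rewrite subrr normr0 (le_lt_trans _ dr).
rewrite addrC addKr; apply: le_trans (ler_wpM2r (normr_ge0 _) (ler_norm L)) _.
exact: ler_wpM2l.
Qed.

Section Separable.
Context {I : {set 'I_n}} {f1 : vec -> R} {f2 : vec}.
Hypothesis f1_int_invariant :
  forall x y : vec, (forall i, i \notin I -> x ord0 i = y ord0 i) -> f1 x = f1 y.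
Hypothesis f_separable :
  forall x : vec, f x = f1 x + \sum_(i < n | i \in I) f2 ord0 i * x ord0 i.

Lemma grad_int_coord x i : i \in I -> g x ord0 i = f2 ord0 i.
Proof.
move=> iI; have [df dg] := grad_f x.
rewrite -dot_delta -dg -deriveE //.
rewrite /derive; apply: lim_near_cst; first exact: Rhausdorff.
near=> h.
have h0 : h != 0 by near: h; exact: nbhs_dnbhs_neq.
rewrite /= !f_separable (@f1_int_invariant (h *: delta_mx ord0 i + x) x); last first.
  move=> j jI; rewrite !mxE; have -> : (j == i) = false.
    by apply/negbTE; apply: contraNneq jI => ->.
  by rewrite andbF mulr0 add0r.
rewrite opprD addrACA subrr add0r -sumrB (bigD1 i) //= big1; last first.
  by move=> j /andP[_ ji]; rewrite !mxE (negbTE ji) andbF mulr0 add0r subrr.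
by rewrite addr0 !mxE !eqxx /= mulr1 mulrDr addrK /GRing.scale /= mulrCA mulVf // mulr1.
Unshelve. all: by end_near.
Qed.

Definition replace_int (x y : vec) : vec := \row_i if i \in I then x ord0 i else y ord0 i.

Lemma norm_replace_int_le l1 (x y : vec) : `|replace_int x y - x| <= normPL I l1 (y - x).
Proof.
apply: mx_norm_le => [|i0 i]; first exact: normPL_ge0.
rewrite (ord1 i0) !mxE; case: ifP => iI; first by rewrite subrr normr0 normPL_ge0.
by have := entry_le_normPL l1 (y - x) (negbT iI); rewrite !mxE.
Qed.

(* The remainder of the first-order model is unchanged by moving the integer coordinates,
   along which [f] is linear with slope [g]. *)
Lemma linearization_replace_int (x y : vec) :
  f y - f x - dot (g x) (y - x) =
  f (replace_int x y) - f x - dot (g x) (replace_int x y - x).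
Proof.
set y' := replace_int x y.
have f_diff : f y - f y' = \sum_(i < n | i \in I) f2 ord0 i * (y ord0 i - x ord0 i).
  rewrite !f_separable (@f1_int_invariant y' y); last by move=> i iI; rewrite mxE (negbTE iI).
  rewrite opprD addrACA subrr add0r -sumrB; apply: eq_bigr => i iI.
  by rewrite mxE iI mulrBr.
have dot_diff : dot (g x) (y - y') = \sum_(i < n | i \in I) f2 ord0 i * (y ord0 i - x ord0 i).
  rewrite /dot [RHS]big_mkcond /=; apply: eq_bigr => i _; rewrite !mxE.
  by case: ifP => iI; [rewrite grad_int_coord | rewrite subrr mulr0].
have -> : y - x = (y - y') + (y' - x) by rewrite addrA subrK.
rewrite dotDr dot_diff -f_diff; ring.
Qed.

(* Once [D] is small, the Taylor remainder [O(D^2)] is at most [(1 - rho) eps < (1 - rho) Psi],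
   so the actual decrease is at least [rho Psi]. *)
Lemma sufficient_decrease (X : set vec) l1 (rho eps : R) (x : vec) :
  (exists r : R, 0 < r /\ exists L : R, forall y z : vec,
     `|y - x| < r -> `|z - x| < r -> `|g y - g z| <= L * `|y - z|) ->
  rho < 1 -> 0 < eps ->
  exists2 delta, 0 < delta & forall D y, D <= delta ->
    is_argmin X I l1 g x D y -> eps < dot (g x) (x - y) ->
    rho * dot (g x) (x - y) <= f x - f y.
Proof.
move=> [r [r0 [L lipg]]] rho_lt1 eps0.
set C := n%:R * `|L|.
have C0 : 0 <= C by rewrite mulr_ge0.
set delta := Num.min 1 (Num.min (r / 2) ((1 - rho) * eps / (C + 1))).
have [delta_le1 delta_le_r delta_le_eps] :
    [/\ delta <= 1, delta <= r / 2 & delta <= (1 - rho) * eps / (C + 1)].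
  by split; rewrite !ge_min lexx ?orbT.
exists delta => [|D y D_le [_ [By _]] Psi_gt].
  by rewrite !lt_min ltr01 !divr_gt0 ?mulr_gt0 ?subr_gt0 ?ltr_wpDl.
set d := replace_int x y - x.
have d_le : `|d| <= delta := le_trans (norm_replace_int_le l1 x y) (le_trans By D_le).
have d_lt_r : `|d| < r.
  by apply: (le_lt_trans d_le (le_lt_trans delta_le_r _)); rewrite ltr_pdivrMr // ltr_pMr // ltr1n.
have := linearization_error_le lipg d_lt_r.
rewrite /d [x + _]addrC subrK -linearization_replace_int -/C => remainder_le.
have C_d2 : C * (`|d| * `|d|) <= (1 - rho) * eps.
  have d2_le : `|d| * `|d| <= delta.
    by rewrite -[leRHS]mulr1 ler_pM // (le_trans d_le).
  apply: le_trans (_ : (C + 1) * delta <= _); last by rewrite mulrC -ler_pdivlMr ?ltr_wpDl.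
  by rewrite (le_trans (ler_wpM2l C0 d2_le)) // ler_wpM2r ?lerDl // (le_trans _ d_le).
have eps_Psi : (1 - rho) * eps <= (1 - rho) * dot (g x) (x - y).
  by rewrite ler_wpM2l ?subr_ge0 ?ltW.
have dotN : dot (g x) (y - x) = - dot (g x) (x - y) by rewrite !dotBr opprB.
move: remainder_le; rewrite dotN ler_norml => /andP[_ upper].
lra.
Qed.

End Separable.
End Gradient.

Section Subproblem.
Context {R : realType} {n : nat}.
Notation vec := 'rV[R]_n.

Lemma closed_polyhedron p (A : 'M[R]_(p, n)) (b : 'cV[R]_p) : closed (polyhedron A b).
Proof.
have -> : polyhedron A b =
    \bigcap_(j in setT) (dot (row j A) @^-1` [set r | r <= b j ord0]).
  apply/seteqP; split => w /= hw j.
    by move=> _; rewrite /= -mulmx_tr_dot; exact: hw.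
  by rewrite mulmx_tr_dot; exact: hw.
apply: closed_bigI => j _; apply: preimage_closed => [w _|]; last exact: closed_le.
exact: dot_continuous.
Qed.

Lemma closed_feasible (Xbar : set vec) I : closed Xbar -> closed (feasible Xbar I).
Proof.
move=> closed_Xbar.
have -> : feasible Xbar I = Xbar `&`
    \bigcap_(i in [set i | i \in I]) ((fun w : vec => w ord0 i) @^-1` [set r | r \is a Num.int]).
  by apply/seteqP; split => w [Xw intw]; split.
apply: closedI => //; apply: closed_bigI => i _.
by apply: preimage_closed => [w _|]; [exact: coord_continuous | exact: closed_int].
Qed.

Context {X : set vec} {I : {set 'I_n}} {l1 : bool} {g : vec -> vec}.

(* Existence of the step (S1): the trust region meets [X] in a compact set, since the integer
   coordinates are bounded and the others lie within [D] of those of [x]. *)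
Lemma argmin_exists (x : vec) (D M : R) :
  closed X -> (forall w, X w -> forall i, i \in I -> `|w ord0 i| <= M) ->
  X x -> 0 <= D -> exists y, is_argmin X I l1 g x D y.
Proof.
move=> closedX intM Xx D0.
set S := X `&` ballPL I l1 x D.
have S_ne : S !=set0 by exists x; split => //; rewrite /ballPL /= subrr normPL0.
have S_compact : compact S.
  apply: bounded_closed_compact; last by apply: closedI => //; exact: closed_ballPL.
  exists (`|M| + `|x| + D); split; first by rewrite num_real.
  move=> K K_gt w [Xw Bw] /=; apply/ltW/(le_lt_trans _ K_gt).
  apply: mx_norm_le => [|i0 i]; first by rewrite !addr_ge0.
  rewrite (ord1 i0); have [iI|iI] := boolP (i \in I).
    apply: le_trans (intM _ Xw _ iI) _.
    by rewrite -addrA (le_trans (ler_norm M)) // lerDl addr_ge0.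
  have wx_le : `|w ord0 i - x ord0 i| <= D.
    by apply: le_trans Bw; have := entry_le_normPL l1 (w - x) iI; rewrite !mxE.
  apply: le_trans (_ : `|w ord0 i - x ord0 i| + `|x ord0 i| <= _).
    by rewrite -[Z in `|Z| <= _](subrK (x ord0 i)) ler_normD.
  by rewrite [leRHS]addrC lerD // (le_trans (mx_entry_le_norm x _ i)) ?lerDr.
have [c Sc c_min] := compact_EVT_min S_ne S_compact
  (continuous_subspaceT (@dot_continuous _ _ (g x)) : {within S, continuous dot (g x)}).
move: Sc; rewrite inE => -[Xc Bc].
by exists c; split => //; split => // w Xw Bw; apply: c_min; rewrite inE.
Qed.

Lemma Psi_le_argmin x D y :
  is_argmin X I l1 g x D y -> Psi X I l1 g x D <= dot (g x) (x - y).
Proof.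
move=> [Xy [By y_min]]; apply: ge_sup; first by exists (dot (g x) (x - y)), y.
by move=> _ [w [Xw Bw] <-]; rewrite !dotBr lerD2l lerN2; exact: y_min.
Qed.

End Subproblem.

Lemma geometric_le {R : realType} (kappa D delta : R) :
  0 < kappa < 1 -> 0 < delta -> exists k : nat, kappa ^+ k * D <= delta.
Proof.
move=> /andP[k0 k1] delta0.
have norm_gt0 : 0 < `|D| + 1 by rewrite ltr_wpDl.
have := @cvg_expr R kappa; rewrite gtr0_norm // => /(_ k1) /cvgrPdist_lt.
move=> /(_ _ (divr_gt0 delta0 norm_gt0)) [N _ /(_ N (leqnn N))].
rewrite sub0r normrN gtr0_norm ?exprn_gt0 // ltr_pdivlMr // => kN_lt.
exists N; apply: le_trans (ler_norm _) (le_trans _ (ltW kN_lt)).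
by rewrite normrM gtr0_norm ?exprn_gt0 // ler_pM2l ?exprn_gt0 ?lerDl.
Qed.

Lemma next_radius_gt0 {R : realType} (kappa rho1 rho2 Dmin Dmax a Ps D D' : R) :
  0 < kappa -> 0 < Dmin -> 0 < D ->
  next_radius kappa rho1 rho2 Dmin Dmax a Ps D D' -> 0 < D'.
Proof.
move=> kappa0 Dmin0 D0 [[[_ ->]|[[_ [_ ->]]|[_ ->]]]|[Dmin_le _]].
- exact: mulr_gt0.
- exact: D0.
- exact: divr_gt0.
- exact: lt_le_trans Dmin_le.
Qed.

Lemma reference_value_update {R : realType} {rho kappam eps m fy Ps : R} :
  0 < rho -> 0 < kappam <= 1 -> 0 < eps -> eps < Ps -> rho * Ps <= m - fy ->
  fy <= (1 - kappam) * m + kappam * fy /\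
  (1 - kappam) * m + kappam * fy <= m - kappam * rho * eps.
Proof.
move=> rho0 /andP[km0 km1] eps0 Ps_gt decrease.
have rho_eps : rho * eps <= rho * Ps by rewrite ler_pM2l ?ltW.
have : kappam * (rho * eps) <= kappam * (m - fy) by rewrite ler_pM2l ?(le_trans rho_eps).
have decrease_ge0 : 0 <= m - fy.
  exact: le_trans (mulr_ge0 (ltW rho0) (ltW (lt_trans eps0 Ps_gt))) decrease.
have : 0 <= (1 - kappam) * (m - fy) by apply: mulr_ge0 decrease_ge0; rewrite subr_ge0.
split; nra.
Qed.

Section Convergence.
Context {R : realType} {n : nat}.
Notation vec := 'rV[R]_n.
Context {X : set vec} {I : {set 'I_n}} {l1 : bool} {f : vec -> R} {g : vec -> vec}.
Context {rho kappa kappam rho1 rho2 Dmin Dmax eps lb : R}.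
Hypotheses (rho_gt0 : 0 < rho) (kappa01 : 0 < kappa < 1) (kappam01 : 0 < kappam <= 1).
Hypotheses (Dmin_gt0 : 0 < Dmin) (eps_gt0 : 0 < eps).
Hypothesis argmin_solvable :
  forall x (D : R), X x -> 0 < D -> exists y, is_argmin X I l1 g x D y.
Hypothesis decrease_small_radius : forall x, X x ->
  exists2 delta : R, 0 < delta & forall D y, D <= delta ->
    is_argmin X I l1 g x D y -> eps < dot (g x) (x - y) ->
    rho * dot (g x) (x - y) <= f x - f y.
Hypothesis f_ge_lb : forall x, X x -> lb <= f x.

Notation terminates := (smil_terminates X I l1 f g rho kappa kappam rho1 rho2 Dmin Dmax eps).

Let terminates_below (m : R) := forall y (m' D' : R),
  X y -> f y <= m' -> m' <= m - kappam * rho * eps -> 0 < D' -> terminates y m' D'.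

Lemma smil_terminates_shrink x (m D : R) : X x -> 0 < D -> terminates_below m ->
  (forall y, is_argmin X I l1 g x D y -> eps < dot (g x) (x - y) ->
     m - f y < rho * dot (g x) (x - y) -> terminates x m (kappa * D)) ->
  terminates x m D.
Proof.
move=> Xx D0 accepted shrunk; apply: smil_step; first exact: argmin_solvable.
move=> y y_min /=; split; last split.
- move=> Psi_le; split => //; split => //.
  by apply: le_trans Psi_le; exact: Psi_le_argmin.
- exact: shrunk.
- move=> Psi_gt decrease D' D'_next; have [Xy _] := y_min.
  have [fy_le m'_le] := reference_value_update rho_gt0 kappam01 eps_gt0 Psi_gt decrease.
  apply: accepted => //.
  by apply: next_radius_gt0 D'_next; [case/andP: kappa01 | |].
Qed.

(* Inner loop (S4): once [kappa^k D] is below the radius of sufficient decrease at [x],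
   the shrinking test can no longer fail, so at most [k] shrinkings occur. *)
Lemma smil_terminates_inner x (m D : R) :
  X x -> f x <= m -> 0 < D -> terminates_below m -> terminates x m D.
Proof.
move=> Xx fx_le D0 accepted.
have [delta delta0 decrease] := decrease_small_radius Xx.
have [k] := geometric_le D kappa01 delta0.
elim: k D D0 => [|k IHk] D D0 kD_le.
  apply: (smil_terminates_shrink Xx D0 accepted) => y y_min Psi_gt m_lt.
  rewrite expr0 mul1r in kD_le.
  have := decrease D y kD_le y_min Psi_gt.
  by move: m_lt fx_le; lra.
apply: (smil_terminates_shrink Xx D0 accepted) => y _ _ _.
by apply: IHk; rewrite ?mulr_gt0 ?(andP kappa01).1 // mulrA -exprSr.
Qed.

Lemma smil_terminates_bounded (N : nat) x (m D : R) : X x -> f x <= m ->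
  m < lb + N%:R * (kappam * rho * eps) -> 0 < D -> terminates x m D.
Proof.
elim: N x m D => [|N IHN] x m D Xx fx_le m_lt D0.
  by have := f_ge_lb Xx; rewrite mul0r addr0 in m_lt; lra.
apply: (smil_terminates_inner Xx fx_le D0) => y m' D' Xy fy_le m'_le D'0.
by apply: IHN => //; rewrite -nat1r mulrDl mul1r in m_lt; lra.
Qed.

Lemma smil_terminates_from x (D : R) : X x -> 0 < D -> terminates x (f x) D.
Proof.
move=> Xx D0.
have c0 : 0 < kappam * rho * eps by rewrite !mulr_gt0 ?(andP kappam01).1.
set t := `|(f x - lb) / (kappam * rho * eps)|.
apply: (smil_terminates_bounded (N := Num.Def.archi_bound t)) => //.
have t_lt := archi_boundP (normr_ge0 ((f x - lb) / (kappam * rho * eps))).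
have : f x - lb <= t * (kappam * rho * eps).
  by rewrite /t normrM normfV (gtr0_norm c0) divfK ?gt_eqF ?ler_norm.
have : t * (kappam * rho * eps) < (Num.Def.archi_bound t)%:R * (kappam * rho * eps).
  by rewrite ltr_pM2r.
lra.
Qed.

End Convergence.

Theorem mainTheorem9
  (R : realType) (n : nat)
  (p : nat) (A : 'M[R]_(p, n)) (b : 'cV[R]_p) (I : {set 'I_n})
  (l1 : bool)
  (f : 'rV[R]_n -> R) (g : 'rV[R]_n -> 'rV[R]_n)
  (hXne : exists x, feasible (polyhedron A b) I x)
  (hdiff : forall x, differentiable f x /\ forall h, 'd f x h = dot (g x) h)
  (hlip : forall x, exists r, 0 < r /\ exists L, forall y z,
            `|y - x| < r -> `|z - x| < r -> `|g y - g z| <= L * `|y - z|)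
  (hsep : exists (f1 : 'rV[R]_n -> R) (f2 : 'rV[R]_n),
            (forall x y : 'rV[R]_n, (forall i, i \notin I -> x ord0 i = y ord0 i) -> f1 x = f1 y) /\
            forall x : 'rV[R]_n, f x = f1 x + \sum_(i < n | i \in I) f2 ord0 i * x ord0 i)
  (hbnd : exists M, forall x, feasible (polyhedron A b) I x ->
            forall i, i \in I -> `|x ord0 i| <= M)
  (hinf : exists lb, forall x, feasible (polyhedron A b) I x -> lb <= f x)
  (x0 : 'rV[R]_n) (hx0 : feasible (polyhedron A b) I x0) (eps : R) (heps : 0 < eps)
  (D0 rho kappa kappam rho1 rho2 Dmin Dmax : R)
  (hD0 : 0 < D0) (hrho : 0 < rho < 1) (hkappa : 0 < kappa < 1)
  (hkappam : 0 < kappam <= 1)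
  (hrho1 : rho <= rho1) (hrho12 : rho1 < rho2) (hrho2 : rho2 < 1)
  (hDmin : 0 < Dmin) (hDminmax : Dmin <= Dmax) :
  smil_terminates (feasible (polyhedron A b) I) I l1 f g
    rho kappa kappam rho1 rho2 Dmin Dmax eps x0 (f x0) D0.
Proof.
have [f1 [f2 [f1_int_invariant f_separable]]] := hsep.
have [M int_bounded] := hbnd.
have [lb f_ge_lb] := hinf.
have [rho0 rho_lt1] := andP hrho.
have closedX : closed (feasible (polyhedron A b) I).
  exact/closed_feasible/closed_polyhedron.
apply: (smil_terminates_from rho0 hkappa hkappam hDmin heps _ _ f_ge_lb) => //
  [x D Xx D_gt0 | x _].
- exact: argmin_exists closedX int_bounded Xx (ltW D_gt0).
- exact: (sufficient_decrease hdiff f1_int_invariant f_separable _ _ (hlip x) rho_lt1 heps).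
Qed.
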